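(* Let $f_0\in\mathbb{R}$, $g\in\mathbb{R}^n$, $H$ a symmetric $n\times n$ matrix, $\sigma>0$, and $m(s)=f_0+\langle g,s\rangle+\frac12\langle Hs,s\rangle+\frac16\sigma\|s\|^3$. Suppose $s\in\mathbb{R}^n$ and $\beta\ge0$ satisfy $m(0)-m(s)\ge\beta$. Then $$\|s\|\le\frac{\frac12\|H\|_{r,2}+\sqrt{\|H\|_{r,2}^2+\frac23\sigma\|g\|_{r,1}}}{\frac13\sigma}.$$ Moreover, if $\beta>0$, then: if $\lambda_r[H]<0$, $$\|s\|\ge\frac{\sqrt{\|g\|_{r,1}^2+2\beta|\lambda_r[H]|}-\|g\|_{r,1}}{|\lambda_r[H]|};$$ and if $\lambda_r[H]\ge0$, then $g\neq0$ and $\|s\|\ge\beta/\|g\|_{r,1}$.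
   Context: $\|\cdot\|$ is an arbitrary (possibly non-smooth) norm on $\mathbb{R}^n$, $\langle\cdot,\cdot\rangle$ the Euclidean inner product, $\|v\|_{r,1}=\max_{\|s\|=1}|\langle v,s\rangle|$ the dual norm, and for a symmetric matrix $H$, $\|H\|_{r,2}=\max_{\|v\|=1}|\langle Hv,v\rangle|$ and $\lambda_r[H]=\min_{\|v\|=1}\langle Hv,v\rangle$. *)

From HB Require Import structures.
From mathcomp Require Import all_boot all_order all_algebra.
From mathcomp Require Import classical_sets reals.
Set Implicit Arguments. Unset Strict Implicit. Unset Printing Implicit Defensive.
Import Order.TTheory GRing.Theory Num.Theory.
Local Open Scope ring_scope.
Local Open Scope classical_set_scope.

Section Defs.
Variables (R : realType) (n : nat).

Definition inner (u v : 'cV[R]_n) : R := \sum_(i < n) u i 0 * v i 0.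

Definition is_norm (nrm : 'cV[R]_n -> R) : Prop :=
  [/\ forall x, 0 <= nrm x,
      forall x, nrm x = 0 -> x = 0,
      forall (a : R) x, nrm (a *: x) = `|a| * nrm x
    & forall x y, nrm (x + y) <= nrm x + nrm y].

(* Dual norm  ||v||_{r,1} = max_{||s||=1} |<v,s>|  (max = sup, attained by compactness). *)
Definition dual_norm (nrm : 'cV[R]_n -> R) (v : 'cV[R]_n) : R :=
  sup [set `|inner v s| | s in [set s | nrm s = 1]].

Definition mat_norm (nrm : 'cV[R]_n -> R) (H : 'M[R]_n) : R :=
  sup [set `|inner (H *m v) v| | v in [set v | nrm v = 1]].

Definition lambda_r (nrm : 'cV[R]_n -> R) (H : 'M[R]_n) : R :=
  inf [set inner (H *m v) v | v in [set v | nrm v = 1]].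

Definition cubic_model (nrm : 'cV[R]_n -> R) (f0 : R) (g : 'cV[R]_n)
  (H : 'M[R]_n) (sigma : R) (s : 'cV[R]_n) : R :=
  f0 + inner g s + 2^-1 * inner (H *m s) s + 6^-1 * sigma * nrm s ^+ 3.

End Defs.

(* Geometrically, the three
   quantities ||g||_{r,1}, ||H||_{r,2} and lambda_r[H] are suprema/infima of
   homogeneous functions over the unit sphere of ||.||; once these sets are
   known to be bounded, homogeneity gives, with t = ||s||,
     |<g,s>| <= ||g||_{r,1} t,  |<Hs,s>| <= ||H||_{r,2} t^2,
     lambda_r[H] t^2 <= <Hs,s>.
   Boundedness follows from the equivalence of norms on R^n: every norm
   dominates each coordinate, which we obtain from the compactness of the
   sup-norm unit sphere and the continuity of ||.||.
   Plugging these estimates into m(0) - m(s) >= beta leaves one-variable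
   polynomial inequalities in t (a cubic, a quadratic and a linear one),
   which are solved in a separate section over any real closed field. *)

From HB Require Import structures.
From mathcomp Require Import all_boot all_order all_algebra.
From mathcomp Require Import all_classical all_reals.
From mathcomp Require Import topology normedtype derive.
From mathcomp Require Import lra ring.
Import Order.TTheory GRing.Theory Num.Theory.
Import numFieldNormedType.Exports.
Set Implicit Arguments. Unset Strict Implicit. Unset Printing Implicit Defensive.
Local Open Scope ring_scope.
Local Open Scope classical_set_scope.

Section NormBasics.
Variables (R : realType) (n : nat) (nrm : 'cV[R]_n -> R).
Hypothesis nrm_is_norm : is_norm nrm.

Lemma nrm_ge0 x : 0 <= nrm x. Proof. by case: nrm_is_norm. Qed.
Lemma nrmZ a x : nrm (a *: x) = `|a| * nrm x. Proof. by case: nrm_is_norm. Qed.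
Lemma nrmD x y : nrm (x + y) <= nrm x + nrm y. Proof. by case: nrm_is_norm. Qed.

Lemma nrm0 : nrm 0 = 0.
Proof. by rewrite -(scale0r 0) nrmZ normr0 mul0r. Qed.

Lemma nrm_gt0 x : x != 0 -> 0 < nrm x.
Proof.
move=> x0; rewrite lt_def nrm_ge0 andbT; apply: contra x0 => /eqP.
by case: nrm_is_norm => _ nrm_eq0 _ _ /nrm_eq0 ->.
Qed.

Lemma nrm_sum (I : finType) (F : I -> 'cV[R]_n) :
  nrm (\sum_i F i) <= \sum_i nrm (F i).
Proof.
elim/big_rec2: _ => [|i y1 y2 _ IH]; first by rewrite nrm0.
by apply: le_trans (nrmD _ _) _; rewrite lerD2l.
Qed.

Lemma nrm_sub_le x y : `|nrm x - nrm y| <= nrm (x - y).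
Proof.
have Hx : nrm x <= nrm (x - y) + nrm y by rewrite -{1}(subrK y x) nrmD.
have Hy : nrm y <= nrm (x - y) + nrm x.
  rewrite -{1}(subrK x y) -(opprB x y) -scaleN1r.
  by apply: le_trans (nrmD _ _) _; rewrite nrmZ normrN1 mul1r.
rewrite ler_norml; apply/andP; split; lra.
Qed.

End NormBasics.

Lemma row_entry_le_norm (R : realType) n (v : 'rV[R]_n) i : `|v ord0 i| <= `|v|.
Proof.
rewrite (_ : `|v| = mx_norm v)// mx_normrE.
by apply/bigmax_geP; right => /=; exists (ord0, i).
Qed.

Lemma unit_sphere_compact (R : realType) n :
  compact [set v : 'rV[R]_n | `|v| = 1].
Proof.
apply: bounded_closed_compact.
  rewrite /= /bounded_near; near=> M => v /= -> /=; near: M.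
  by apply: nbhs_pinfty_ge; rewrite real1.
have -> : [set v : 'rV[R]_n | `|v| = 1] = (@Num.norm _ _) @^-1` [set 1] by [].
apply: preimage_closed; last exact: closed_eq.
by move=> y _; exact: norm_continuous.
Unshelve. all: by end_near.
Qed.

(* Equivalence of an arbitrary norm with the sup-norm.  The library's
   topology and compactness criterion live on row vectors, so the norm is
   transported there through transposition. *)
Section NormEquivalence.
Variables (R : realType) (n : nat) (nrm : 'cV[R]_n -> R).
Hypothesis nrm_is_norm : is_norm nrm.

(* The norm is dominated by a multiple of the sup-norm (expand v in the
   canonical basis). *)
Lemma nrm_le_sup_norm (v : 'rV[R]_n) :
  nrm v^T <= (\sum_(i < n) nrm (delta_mx i 0)) * `|v|.
Proof.
rewrite {1}(matrix_sum_delta v^T).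
under eq_bigr => i _ do rewrite big_ord1.
apply: le_trans (nrm_sum nrm_is_norm _) _.
rewrite mulr_suml; apply: ler_sum => i _.
rewrite (nrmZ nrm_is_norm) mxE mulrC ler_wpM2l ?nrm_ge0//.
exact: row_entry_le_norm.
Qed.

(* Hence, by the reverse triangle inequality, the norm is continuous. *)
Lemma nrm_row_continuous : continuous (fun v : 'rV[R]_n => nrm v^T).
Proof.
set K := \sum_(i < n) nrm (delta_mx i 0).
have K0 : 0 <= K by apply: sumr_ge0 => i _; apply: nrm_ge0.
have K1 : 0 < K + 1 by rewrite ltr_pwDr.
move=> x; apply/(cvgrPdist_le (FF := nbhs_filter x)) => e e0.
have : \forall t \near x, `|x - t| < e / (K + 1).
  by apply/nbhs_normP; exists (e / (K + 1)) => //=; rewrite divr_gt0.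
apply: filterS => t /ltW xt.
apply: le_trans (nrm_sub_le nrm_is_norm _ _) _.
rewrite -linearB; apply: le_trans (nrm_le_sup_norm _) _.
apply: le_trans (ler_wpM2l K0 xt) _.
by rewrite mulrCA ger_pMr // ler_pdivrMr // mul1r lerDl.
Qed.

(* Every norm dominates each coordinate: v |-> ||v^T|| attains a positive
   minimum m on the compact sup-norm sphere, so |x_i| <= |x^T| <= ||x|| / m. *)
Lemma entry_le_nrm :
  exists2 C : R, 0 <= C & forall (x : 'cV[R]_n) i, `|x i 0| <= C * nrm x.
Proof.
have [[i0 _]|no_index] := pselect (exists i : 'I_n, True); last first.
  by exists 0 => // x i; exfalso; apply: no_index; exists i.
pose S := [set v : 'rV[R]_n | `|v| = 1].
have S0 : S !=set0.
  have e0 : delta_mx ord0 i0 != 0 :> 'rV[R]_n.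
    apply/eqP => /matrixP /(_ ord0 i0); rewrite !mxE !eqxx /=.
    by move/eqP; rewrite oner_eq0.
  exists (`|delta_mx ord0 i0 : 'rV[R]_n|^-1 *: delta_mx ord0 i0).
  exact: normfZV.
have [c Sc c_min] := compact_EVT_min S0 (@unit_sphere_compact R n)
  (continuous_subspaceT nrm_row_continuous).
have m_gt0 : 0 < nrm c^T.
  apply: nrm_gt0 => //; apply: contraTneq Sc => /(congr1 trmx).
  rewrite trmxK trmx0 => ->; apply/negP.
  by rewrite inE /S /= normr0 => /esym/eqP; rewrite oner_eq0.
exists (nrm c^T)^-1 => [|x i]; first by rewrite invr_ge0 ltW.
have [->|x0] := eqVneq x 0; first by rewrite mxE normr0 nrm0 // mulr0.
have xT_gt0 : 0 < `|x^T| by rewrite normr_gt0 -trmx0 (inj_eq trmx_inj).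
have /c_min : `|x^T|^-1 *: x^T \in S.
  by rewrite inE; apply: normfZV; rewrite -normr_gt0.
rewrite linearZ /= trmxK nrmZ // normrV ?unitfE ?gt_eqF // normr_id => min_le.
have xT_le : `|x^T| <= (nrm c^T)^-1 * nrm x.
  by rewrite ler_pdivlMl // mulrC -ler_pdivlMl // mulrC.
by apply: le_trans xT_le; have := row_entry_le_norm x^T i; rewrite mxE.
Qed.

End NormEquivalence.

Section InnerProduct.
Variables (R : realType) (n : nat).

Lemma innerZr (u v : 'cV[R]_n) a : inner u (a *: v) = a * inner u v.
Proof.
by rewrite /inner mulr_sumr; apply: eq_bigr => i _; rewrite mxE mulrCA.
Qed.

Lemma inner0r (u : 'cV[R]_n) : inner u 0 = 0.
Proof. by rewrite -(scale0r 0) innerZr mul0r. Qed.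

Lemma inner0l (u : 'cV[R]_n) : inner 0 u = 0.
Proof. by rewrite /inner big1 // => i _; rewrite mxE mul0r. Qed.

Lemma quad_formZ (M : 'M[R]_n) a v :
  inner (M *m (a *: v)) (a *: v) = `|a| ^+ 2 * inner (M *m v) v.
Proof.
rewrite -scalemxAr innerZr /inner mulr_sumr mulr_sumr real_normK ?num_real //.
by apply: eq_bigr => i _; rewrite mxE; ring.
Qed.

Lemma inner_le_entries (w v : 'cV[R]_n) b : (forall i, `|v i 0| <= b) ->
  `|inner w v| <= (\sum_i `|w i 0|) * b.
Proof.
move=> vb; rewrite /inner mulr_suml; apply: le_trans (ler_norm_sum _ _ _) _.
by apply: ler_sum => i _; rewrite normrM ler_wpM2l.
Qed.

Lemma mulmx_entries_le (M : 'M[R]_n) (v : 'cV[R]_n) b :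
  (forall i, `|v i 0| <= b) ->
  \sum_i `|(M *m v) i 0| <= (\sum_i \sum_j `|M i j|) * b.
Proof.
move=> vb; rewrite mulr_suml; apply: ler_sum => i _; rewrite mxE mulr_suml.
apply: le_trans (ler_norm_sum _ _ _) _.
by apply: ler_sum => j _; rewrite normrM ler_wpM2l.
Qed.

End InnerProduct.

Section HomogeneousBounds.
Variables (R : realType) (n : nat) (nrm : 'cV[R]_n -> R).
Hypothesis nrm_is_norm : is_norm nrm.
Variables (f : 'cV[R]_n -> R) (k : nat).
Hypothesis k_gt0 : (0 < k)%N.
Hypothesis fZ : forall a v, f (a *: v) = `|a| ^+ k * f v.

Let S := [set f u | u in [set u | nrm u = 1]].

Let expr0k : (0 : R) ^+ k = 0.
Proof. by rewrite -(prednK k_gt0) exprS mul0r. Qed.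

Lemma homog_sphere v : f v = nrm v ^+ k * f ((nrm v)^-1 *: v) /\
  (v != 0 -> S (f ((nrm v)^-1 *: v))).
Proof.
have [->|v0] := eqVneq v 0.
  have f0 : f 0 = 0 by have := fZ 0 0; rewrite scale0r normr0 expr0k mul0r.
  by rewrite scaler0 f0 mulr0.
have v_gt0 := nrm_gt0 nrm_is_norm v0.
have iv_ge0 : 0 <= (nrm v)^-1 by rewrite invr_ge0 ltW.
have u1 : nrm ((nrm v)^-1 *: v) = 1.
  by rewrite nrmZ // ger0_norm // mulVf ?gt_eqF.
split=> [|_]; last by exists ((nrm v)^-1 *: v).
by rewrite fZ ger0_norm // mulrA -exprMn mulfV ?gt_eqF // expr1n mul1r.
Qed.

Lemma homog_le_sup : has_ubound S -> forall v, f v <= sup S * nrm v ^+ k.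
Proof.
move=> Sub v; have [fv Sv] := homog_sphere v.
have [v0|v0] := eqVneq v 0; first by rewrite fv v0 nrm0 // expr0k mul0r mulr0.
by rewrite fv mulrC ler_wpM2r ?exprn_ge0 ?nrm_ge0 //; exact: ub_le_sup (Sv v0).
Qed.

Lemma homog_ge_inf : has_lbound S -> forall v, inf S * nrm v ^+ k <= f v.
Proof.
move=> Slb v; have [fv Sv] := homog_sphere v.
have [v0|v0] := eqVneq v 0; first by rewrite fv v0 nrm0 // expr0k mul0r mulr0.
by rewrite fv mulrC ler_wpM2l ?exprn_ge0 ?nrm_ge0 //; exact: ge_inf (Sv v0).
Qed.

Lemma sphere_image_bounded B : (forall v, `|f v| <= B * nrm v ^+ k) ->
  has_ubound S /\ has_lbound S.
Proof.
move=> fB; have Su : forall x, S x -> `|x| <= B.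
  by move=> _ [u /= u1 <-]; apply: le_trans (fB u) _; rewrite u1 expr1n mulr1.
split; [exists B | exists (- B)] => x /Su; rewrite ler_norml => /andP[].
- by [].
- by rewrite lerNl.
Qed.

End HomogeneousBounds.

(* The supremum of a bounded set of nonnegative reals is nonnegative
   (this includes the empty set, whose supremum is 0). *)
Lemma sup_ge0 (R : realType) (S : set R) :
  has_ubound S -> (forall x, S x -> 0 <= x) -> 0 <= sup S.
Proof.
move=> Sub S_ge0; have [[x Sx]|S0] := pselect (S !=set0).
  exact: le_trans (S_ge0 _ Sx) (ub_le_sup Sub Sx).
suff -> : S = set0 by rewrite sup0.
by apply/seteqP; split => // x Sx; apply: S0; exists x.
Qed.

Section DualQuantities.
Variables (R : realType) (n : nat) (nrm : 'cV[R]_n -> R).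
Hypothesis nrm_is_norm : is_norm nrm.

(* Linear and quadratic forms grow at most like ||v|| and ||v||^2, by the
   equivalence of norms. *)
Lemma linear_form_le (g : 'cV[R]_n) :
  exists B, forall v, `|inner g v| <= B * nrm v ^+ 1.
Proof.
have [C _ entry_le] := entry_le_nrm nrm_is_norm.
exists ((\sum_i `|g i 0|) * C) => v.
by rewrite expr1 -mulrA; apply: inner_le_entries.
Qed.

Lemma quad_form_le (H : 'M[R]_n) :
  exists B, forall v, `|inner (H *m v) v| <= B * nrm v ^+ 2.
Proof.
have [C C0 entry_le] := entry_le_nrm nrm_is_norm.
exists ((\sum_i \sum_j `|H i j|) * C * C) => v.
have Cv0 : 0 <= C * nrm v by rewrite mulr_ge0 ?nrm_ge0.
apply: le_trans (inner_le_entries _ (entry_le v)) _.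
suff -> : (\sum_i \sum_j `|H i j|) * C * C * nrm v ^+ 2
        = (\sum_i \sum_j `|H i j|) * (C * nrm v) * (C * nrm v).
  by apply: ler_wpM2r => //; apply: mulmx_entries_le.
by ring.
Qed.

Let sphere := [set u : 'cV[R]_n | nrm u = 1].

Lemma dual_norm_bounded (g : 'cV[R]_n) :
  has_ubound [set `|inner g u| | u in sphere].
Proof.
have [B gB] := linear_form_le g.
have gB' : forall v, `|(`|inner g v|)| <= B * nrm v ^+ 1.
  by move=> v; rewrite normr_id.
by case: (sphere_image_bounded gB').
Qed.

Lemma mat_norm_bounded (H : 'M[R]_n) :
  has_ubound [set `|inner (H *m u) u| | u in sphere].
Proof.
have [B HB] := quad_form_le H.
have HB' : forall v, `|(`|inner (H *m v) v|)| <= B * nrm v ^+ 2.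
  by move=> v; rewrite normr_id.
by case: (sphere_image_bounded HB').
Qed.

Lemma lambda_r_bounded (H : 'M[R]_n) :
  has_lbound [set inner (H *m u) u | u in sphere].
Proof. by have [B HB] := quad_form_le H; case: (sphere_image_bounded HB). Qed.

Lemma dual_norm_ge0 (g : 'cV[R]_n) : 0 <= dual_norm nrm g.
Proof. by apply: sup_ge0 (dual_norm_bounded g) _ => _ [u _ <-]. Qed.

Lemma inner_le_dual_norm (g v : 'cV[R]_n) :
  `|inner g v| <= dual_norm nrm g * nrm v.
Proof.
have fZ a w : `|inner g (a *: w)| = `|a| ^+ 1 * `|inner g w|.
  by rewrite innerZr normrM expr1.
rewrite -[nrm v]expr1.
exact: (homog_le_sup nrm_is_norm (f := fun u => `|inner g u|) (ltn0Sn 0) fZ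
  (dual_norm_bounded g) v).
Qed.

Lemma quad_le_mat_norm (H : 'M[R]_n) v :
  `|inner (H *m v) v| <= mat_norm nrm H * nrm v ^+ 2.
Proof.
have fZ a w :
    `|inner (H *m (a *: w)) (a *: w)| = `|a| ^+ 2 * `|inner (H *m w) w|.
  by rewrite quad_formZ normrM ger0_norm // exprn_ge0.
exact: (homog_le_sup nrm_is_norm (f := fun u => `|inner (H *m u) u|) (ltn0Sn 1)
  fZ (mat_norm_bounded H) v).
Qed.

Lemma lambda_r_le_quad (H : 'M[R]_n) v :
  lambda_r nrm H * nrm v ^+ 2 <= inner (H *m v) v.
Proof.
exact: (homog_ge_inf nrm_is_norm (f := fun u => inner (H *m u) u) (ltn0Sn 1)
  (quad_formZ H) (lambda_r_bounded H) v).
Qed.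

End DualQuantities.

Section ScalarBounds.
Variable R : rcfType.

(* If the cubic G t + M/2 t^2 - sigma/6 t^3 is nonnegative at t >= 0, then t
   is below its positive root; completing the square in
   sigma t^2 - 3 M t - 6 G <= 0 gives the bound. *)
Lemma cubic_decrease_bound (sigma G M t : R) :
  0 < sigma -> 0 <= G -> 0 <= t ->
  0 <= G * t + 2^-1 * M * t ^+ 2 - 6^-1 * sigma * t ^+ 3 ->
  t <= (2^-1 * M + Num.sqrt (M ^+ 2 + 2 / 3 * sigma * G)) / (3^-1 * sigma).
Proof.
move=> s_gt0 G0 t0 dec.
have s3_gt0 : 0 < 3^-1 * sigma by rewrite mulr_gt0 // invr_gt0 ltr0n.
rewrite ler_pdivlMr //.
have sG0 : 0 <= 2 / 3 * sigma * G by apply: mulr_ge0 => //; lra.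
set D := Num.sqrt _; have D0 : 0 <= D := sqrtr_ge0 _.
have DD : D ^+ 2 = M ^+ 2 + 2 / 3 * sigma * G.
  by rewrite sqr_sqrtr ?addr_ge0 ?sqr_ge0.
have M_le_D : - M <= D.
  by apply: le_trans (ler_norm _) _; rewrite normrN -sqrtr_sqr ler_wsqrtr ?lerDl.
move: t0; rewrite le_eqVlt => /predU1P[<-|t_gt0]; first by rewrite mul0r; lra.
have quad_le0 : sigma * t ^+ 2 - 3 * M * t - 6 * G <= 0.
  rewrite -(pmulr_rle0 _ t_gt0).
  have -> : t * (sigma * t ^+ 2 - 3 * M * t - 6 * G)
    = - 6 * (G * t + 2^-1 * M * t ^+ 2 - 6^-1 * sigma * t ^+ 3) by field.
  lra.
have sq_le : (t * (3^-1 * sigma) - 2^-1 * M) ^+ 2 <= D ^+ 2.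
  have -> : (t * (3^-1 * sigma) - 2^-1 * M) ^+ 2
    = 9^-1 * (sigma * (sigma * t ^+ 2 - 3 * M * t - 6 * G))
      + 2 / 3 * sigma * G + 4^-1 * M ^+ 2 by field.
  have : sigma * (sigma * t ^+ 2 - 3 * M * t - 6 * G) <= 0.
    by rewrite pmulr_rle0.
  rewrite DD; have := sqr_ge0 M; lra.
have : t * (3^-1 * sigma) - 2^-1 * M <= D.
  have := ler_wsqrtr sq_le; rewrite !sqrtr_sqr (ger0_norm D0).
  exact: le_trans (ler_norm _).
lra.
Qed.

Lemma quadratic_decrease_bound (beta G l t : R) :
  0 < l -> 0 <= G -> 0 <= t -> beta <= G * t + 2^-1 * l * t ^+ 2 ->
  (Num.sqrt (G ^+ 2 + 2 * beta * l) - G) / l <= t.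
Proof.
move=> l_gt0 G0 t0 dec; rewrite ler_pdivrMr //.
have sq_le : G ^+ 2 + 2 * beta * l <= (l * t + G) ^+ 2.
  have -> : (l * t + G) ^+ 2
    = G ^+ 2 + 2 * l * (G * t + 2^-1 * l * t ^+ 2) by field.
  have := ler_wpM2l (ltW l_gt0) dec; lra.
have lt_ge0 : 0 <= l * t + G by rewrite addr_ge0 // mulr_ge0 // ltW.
have := ler_wsqrtr sq_le; rewrite sqrtr_sqr ger0_norm //.
lra.
Qed.

End ScalarBounds.

Lemma cubic_model_decrease (R : realType) n (nrm : 'cV[R]_n -> R)
    f0 g H sigma s :
  is_norm nrm ->
  cubic_model nrm f0 g H sigma 0 - cubic_model nrm f0 g H sigma s
  = - inner g s - 2^-1 * inner (H *m s) s - 6^-1 * sigma * nrm s ^+ 3.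
Proof.
move=> nrm_is_norm; rewrite /cubic_model mulmx0 !inner0r nrm0 // exprS mul0r.
by ring.
Qed.

Theorem lemma5p4 (R : realType) (n : nat) (nrm : 'cV[R]_n -> R)
  (Hnrm : is_norm nrm) (f0 : R) (g : 'cV[R]_n) (H : 'M[R]_n)
  (Hsym : H^T = H) (sigma : R) (Hsigma : 0 < sigma)
  (s : 'cV[R]_n) (beta : R) (Hbeta : 0 <= beta)
  (Hdec : cubic_model nrm f0 g H sigma 0 - cubic_model nrm f0 g H sigma s >= beta) :
  nrm s <= (2^-1 * mat_norm nrm H
            + Num.sqrt (mat_norm nrm H ^+ 2 + 2 / 3 * sigma * dual_norm nrm g))
           / (3^-1 * sigma)
  /\ (0 < beta ->
      (lambda_r nrm H < 0 ->
         nrm s >= (Num.sqrt (dual_norm nrm g ^+ 2 + 2 * beta * `|lambda_r nrm H|)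
                   - dual_norm nrm g) / `|lambda_r nrm H|)
      /\ (0 <= lambda_r nrm H ->
         g != 0 /\ nrm s >= beta / dual_norm nrm g)).
Proof.
rewrite cubic_model_decrease // in Hdec.
have G0 := dual_norm_ge0 Hnrm g; have t0 := nrm_ge0 Hnrm s.
have /ler_normlP[a_ge _] := inner_le_dual_norm Hnrm g s.
have /ler_normlP[q_ge _] := quad_le_mat_norm Hnrm H s.
have q_geL := lambda_r_le_quad Hnrm H s.
set G := dual_norm nrm g in G0 a_ge *; set M := mat_norm nrm H in q_ge *.
set L := lambda_r nrm H in q_geL *; set t := nrm s in t0 a_ge q_ge q_geL Hdec *.
set a := inner g s in a_ge Hdec *.
set q := inner (H *m s) s in q_ge q_geL Hdec *.
have cubic_ge0 : 0 <= 6^-1 * sigma * t ^+ 3.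
  by apply: mulr_ge0; [apply: mulr_ge0; lra | exact: exprn_ge0].
split.
  by apply: cubic_decrease_bound => //; lra.
move=> beta_gt0; split=> [L_lt0|L_ge0].
  apply: quadratic_decrease_bound => //; first by rewrite normr_gt0 lt_eqF.
  rewrite ltr0_norm //; lra.
(* When lambda_r[H] >= 0 the curvature term only helps: beta <= G t. *)
have q_ge0 : 0 <= q by apply: le_trans q_geL; rewrite mulr_ge0 ?exprn_ge0.
have beta_le : beta <= G * t by lra.
split.
  apply: contraTneq beta_gt0 => g0; rewrite -leNgt.
  have : a = 0 by rewrite /a g0 inner0l.
  lra.
have G_gt0 : 0 < G.
  rewrite lt_def G0 andbT; apply: contraTneq beta_gt0 => G_eq0.
  by rewrite -leNgt -(mul0r t) -G_eq0.
by rewrite ler_pdivrMr // mulrC.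
Qed.
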